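(* Let $G$ be a $B_2$-EPG graph given with a representation, let $a,b$ be two rows, and let $G_{ab}$ be the set of vertices of $G$ with index exactly $\{a,b\}$. Then the subgraph of $G$ induced by $G_{ab}$ is a $2$-track interval graph.
   Context: A graph $G$ is a $B_k$-EPG graph if each vertex $u$ can be assigned a path $P_u$ in the planar orthogonal grid with at most $k$ bends such that $uv\in E(G)$ iff $P_u$ and $P_v$ share at least one grid edge (a representation); for $B_2$-EPG graphs one assumes w.l.o.g. every path has exactly two bends. A vertex $u$ intersects a row if $P_u$ contains a grid edge of that row; the index of $u$ is the set of rows it intersects. A $2$-track interval is the union of two intervals lying on two distinct lines (tracks); a $2$-track interval graph is an intersection graph of $2$-track intervals with the same two tracks, i.e. the edge-union of two interval graphs on the same vertex set. *)

From Stdlib Require Import ZArith Reals List.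
Set Implicit Arguments.
Open Scope Z_scope.

(** Grid points and unit grid edges.  [HE x y] is the horizontal grid edge
    from (x,y) to (x+1,y) (it lies on row y); [VE x y] is the vertical grid
    edge from (x,y) to (x,y+1). *)
Definition point := (Z * Z)%type.
Inductive gedge : Type := HE (x y : Z) | VE (x y : Z).

Definition seg_has (p q : point) (e : gedge) : Prop :=
  match e with
  | HE x y => snd p = y /\ snd q = y /\
              Z.min (fst p) (fst q) <= x /\ x < Z.max (fst p) (fst q)
  | VE x y => fst p = x /\ fst q = x /\
              Z.min (snd p) (snd q) <= y /\ y < Z.max (snd p) (snd q)
  end.

(** A path is given by its list of corner points (start, bends, end). *)
Fixpoint path_has (l : list point) (e : gedge) : Prop :=
  match l with
  | p :: ((q :: _) as t) => seg_has p q e \/ path_has t e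
  | _ => False
  end.

Definition hseg (p q : point) : Prop := snd p = snd q /\ fst p <> fst q.
Definition vseg (p q : point) : Prop := fst p = fst q /\ snd p <> snd q.

(** Consecutive corners span nondegenerate horizontal/vertical segments,
    and consecutive segments are perpendicular (every inner corner is a bend). *)
Fixpoint segs_ok (l : list point) : Prop :=
  match l with
  | p :: ((q :: t') as t) =>
      (hseg p q \/ vseg p q) /\
      match t' with
      | r :: _ => (hseg p q <-> vseg q r)
      | nil => True
      end /\ segs_ok t
  | _ => True
  end.

(** A grid path with at most two bends: 2 to 4 corner points.  (Such paths
    are automatically simple.) *)
Definition B2_path (l : list point) : Prop :=
  (2 <= length l <= 4)%nat /\ segs_ok l.

Definition B2_EPG_rep (V : Type) (E : V -> V -> Prop) (P : V -> list point) : Prop :=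
  (forall u, B2_path (P u)) /\
  (forall u v, u <> v -> (E u v <-> exists e, path_has (P u) e /\ path_has (P v) e)).

Definition intersects_row (P : list point) (y : Z) : Prop :=
  exists x, path_has P (HE x y).
Definition index_is_pair (P : list point) (a b : Z) : Prop :=
  forall y, intersects_row P y <-> (y = a \/ y = b).

Definition interval_ok (I : R * R) : Prop := (fst I <= snd I)%R.
Definition intervals_meet (I J : R * R) : Prop :=
  exists t : R, (fst I <= t <= snd I)%R /\ (fst J <= t <= snd J)%R.

Definition two_track_interval_induced (V : Type) (E : V -> V -> Prop) (S : V -> Prop) : Prop :=
  exists I1 I2 : V -> R * R,
    (forall v, S v -> interval_ok (I1 v) /\ interval_ok (I2 v)) /\
    (forall u v, S u -> S v -> u <> v ->
       (E u v <-> intervals_meet (I1 u) (I1 v) \/ intervals_meet (I2 u) (I2 v))).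

(** A B_2 path that uses two distinct rows must be a "staple": an arm on one
    row, a vertical segment on some column [c] spanning exactly the two rows,
    and an arm on the other row.  Two staples on the same rows share a grid
    edge iff they have the same column or their arms overlap on one of the
    rows.  Mapping each staple to "column plus arm on row a" on track 1 and
    "column plus arm on row b" on track 2 therefore gives a 2-track interval
    representation. *)

From Stdlib Require Import ZArith Reals List Lia Lra.
Import ListNotations.

Definition hrange (c t x : Z) : Prop := Z.min c t <= x < Z.max c t.

Record staple := Staple { col : Z; end_a : Z; end_b : Z }.

Definition staple_has (a b : Z) (s : staple) (e : gedge) : Prop :=
  match e with
  | HE x y => (y = a /\ hrange (col s) (end_a s) x) \/
              (y = b /\ hrange (col s) (end_b s) x)
  | VE x y => x = col s /\ Z.min a b <= y < Z.max a b
  end.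

Lemma path_has_staple (ta c tb ya yb : Z) (e : gedge) :
  path_has [(ta, ya); (c, ya); (c, yb); (tb, yb)] e <->
  staple_has ya yb (Staple c ta tb) e.
Proof. destruct e; simpl; unfold hrange; lia. Qed.

Lemma staple_has_swap (a b c ta tb : Z) (e : gedge) :
  staple_has b a (Staple c tb ta) e <-> staple_has a b (Staple c ta tb) e.
Proof. destruct e; simpl; unfold hrange; lia. Qed.

Lemma two_row_B2_path_shape (l : list point) (a b : Z) :
  a <> b -> B2_path l -> intersects_row l a -> intersects_row l b ->
  exists ta c tb ya yb,
    l = [(ta, ya); (c, ya); (c, yb); (tb, yb)] /\ ta <> c /\ tb <> c /\
    ((ya = a /\ yb = b) \/ (ya = b /\ yb = a)).
Proof.
  intros hab [Hlen Hok] [xa Ha] [xb Hb].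
  destruct l as [|[x0 y0] [|[x1 y1] [|[x2 y2] [|[x3 y3] [|p5 l]]]]];
    simpl in Hlen; try (exfalso; lia); simpl in Ha, Hb, Hok.
  - exfalso. destruct Ha as [[Ha _]|[]], Hb as [[Hb _]|[]]. lia.
  - exfalso.
    destruct Ha as [[_ [Ha _]]|[[Ha _]|[]]], Hb as [[_ [Hb _]]|[[Hb _]|[]]]; lia.
  - assert (rows_a : (y0 = a /\ y1 = a) \/ (y1 = a /\ y2 = a) \/ (y2 = a /\ y3 = a))
      by (destruct Ha as [[? [? _]]|[[? [? _]]|[[? [? _]]|[]]]]; auto).
    assert (rows_b : (y0 = b /\ y1 = b) \/ (y1 = b /\ y2 = b) \/ (y2 = b /\ y3 = b))
      by (destruct Hb as [[? [? _]]|[[? [? _]]|[[? [? _]]|[]]]]; auto).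
    clear Ha Hb Hlen. unfold hseg, vseg in Hok; simpl in Hok.
    destruct Hok as [[[e01 n01]|[e01 n01]] [turn1 [H12 [turn2 [H23 _]]]]].
    + destruct (proj1 turn1 (conj e01 n01)) as [e12 n12].
      assert (e23 : y2 = y3 /\ x2 <> x3).
      { destruct H23 as [h|h]; [exact h|].
        exfalso. apply n12, turn2, h. }
      destruct e23 as [e23 n23]. subst y1 x2 y3.
      exists x0, x1, x3, y0, y2. repeat split; auto. lia.
    + exfalso.
      assert (e12 : y1 = y2).
      { destruct H12 as [[h _]|h]; [exact h|].
        exfalso. apply n01, (proj2 turn1 h). }
      lia.
Qed.

Definition staple_of (a : Z) (l : list point) : staple :=
  match l with
  | [p; q; r; s] =>
      if Z.eq_dec (snd p) a then Staple (fst q) (fst p) (fst s)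
      else Staple (fst q) (fst s) (fst p)
  | _ => Staple 0 0 0
  end.

Lemma staple_of_spec (l : list point) (a b : Z) :
  a <> b -> B2_path l -> intersects_row l a -> intersects_row l b ->
  let s := staple_of a l in
  end_a s <> col s /\ end_b s <> col s /\
  forall e, path_has l e <-> staple_has a b s e.
Proof.
  intros hab Hl Ha Hb.
  destruct (two_row_B2_path_shape _ _ _ hab Hl Ha Hb)
    as (ta & c & tb & ya & yb & -> & nta & ntb & [[-> ->]|[-> ->]]);
    cbn [staple_of fst snd].
  - destruct (Z.eq_dec a a) as [_|]; [|contradiction].
    split; [|split]; [assumption|assumption|]. apply path_has_staple.
  - destruct (Z.eq_dec b a) as [|_]; [congruence|].
    split; [|split]; [assumption|assumption|]. intro e.
    rewrite path_has_staple. apply staple_has_swap.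
Qed.

Definition arms_meet (c1 t1 c2 t2 : Z) : Prop :=
  c1 = c2 \/ exists x, hrange c1 t1 x /\ hrange c2 t2 x.

Lemma staples_share_edge (a b : Z) (s1 s2 : staple) : a <> b ->
  (exists e, staple_has a b s1 e /\ staple_has a b s2 e) <->
  arms_meet (col s1) (end_a s1) (col s2) (end_a s2) \/
  arms_meet (col s1) (end_b s1) (col s2) (end_b s2).
Proof.
  intros hab. unfold arms_meet. split.
  - intros [[x y|x y] [h1 h2]]; simpl in h1, h2.
    + destruct h1 as [[-> r1]|[-> r1]], h2 as [[? r2]|[? r2]];
        try congruence; eauto.
    + left; left; lia.
  - intros [[same|[x [r1 r2]]]|[same|[x [r1 r2]]]].
    1, 3: exists (VE (col s1) (Z.min a b)); simpl; lia.
    + exists (HE x a); simpl; auto.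
    + exists (HE x b); simpl; auto.
Qed.

(** The column [c] sits at [3 c]; the factor 3 keeps arms that merely touch at
    a grid point (and so share no edge) apart. *)
Definition arm_interval (c t : Z) : R * R :=
  if c <? t then (IZR (3 * c), IZR (3 * t - 1))
  else (IZR (3 * t + 1), IZR (3 * c)).

Lemma IZR_intervals_meet (l1 r1 l2 r2 : Z) :
  intervals_meet (IZR l1, IZR r1) (IZR l2, IZR r2) <->
  l1 <= r2 /\ l2 <= r1 /\ l1 <= r1 /\ l2 <= r2.
Proof.
  unfold intervals_meet; cbn [fst snd]; split.
  - intros [t [[h1 h2] [h3 h4]]].
    repeat split; apply le_IZR; lra.
  - intros (h1 & h2 & h3 & h4). exists (IZR (Z.max l1 l2)).
    repeat split; apply IZR_le; lia.
Qed.

Lemma arm_interval_ok (c t : Z) : t <> c -> interval_ok (arm_interval c t).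
Proof.
  intros ntc. unfold interval_ok, arm_interval.
  destruct (Z.ltb_spec c t); cbn [fst snd]; apply IZR_le; lia.
Qed.

Lemma arm_intervals_meet (c1 t1 c2 t2 : Z) : t1 <> c1 -> t2 <> c2 ->
  intervals_meet (arm_interval c1 t1) (arm_interval c2 t2) <->
  arms_meet c1 t1 c2 t2.
Proof.
  intros n1 n2. unfold arm_interval, arms_meet, hrange.
  destruct (Z.ltb_spec c1 t1), (Z.ltb_spec c2 t2);
    rewrite IZR_intervals_meet; split.
  all: try (intros [same|[x r]]; lia).
  all: intros h; destruct (Z.eq_dec c1 c2); [now left|right];
       exists (Z.max (Z.min c1 t1) (Z.min c2 t2)); lia.
Qed.

Theorem lemma3 (V : Type) (E : V -> V -> Prop) (P : V -> list point)
  (Vfin : exists l : list V, forall v, In v l)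
  (Esym : forall u v, E u v -> E v u)
  (Eirr : forall u, ~ E u u)
  (rep : B2_EPG_rep E P) (a b : Z) (hab : a <> b) :
  two_track_interval_induced E (fun v => index_is_pair (P v) a b).
Proof.
  destruct rep as [HB2 HE].
  set (st := fun v => staple_of a (P v)).
  assert (Hst : forall v, index_is_pair (P v) a b ->
            end_a (st v) <> col (st v) /\ end_b (st v) <> col (st v) /\
            forall e, path_has (P v) e <-> staple_has a b (st v) e).
  { intros v Sv. apply staple_of_spec; auto.
    - apply Sv; now left.
    - apply Sv; now right. }
  exists (fun v => arm_interval (col (st v)) (end_a (st v))).
  exists (fun v => arm_interval (col (st v)) (end_b (st v))).
  split.
  - intros v Sv. destruct (Hst v Sv) as (na & nb & _).
    split; apply arm_interval_ok; assumption.
  - intros u v Su Sv nuv.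
    destruct (Hst u Su) as (nua & nub & Hu), (Hst v Sv) as (nva & nvb & Hv).
    rewrite (HE u v nuv), (arm_intervals_meet _ _ _ _ nua nva),
      (arm_intervals_meet _ _ _ _ nub nvb).
    rewrite <- (staples_share_edge _ _ (st u) (st v) hab).
    setoid_rewrite Hu. setoid_rewrite Hv. reflexivity.
Qed.
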